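(* Let $L$ be an even hyperbolic lattice with fixed positive cone $\mathcal{P}_L$, let $G$ be a subgroup of $\mathrm{O}^+(L)$ of finite index, and let $\mathcal{V}\subset\mathcal{N}_L\cap L^\vee$ satisfy (V1)–(V4) below. Let $f\in\overline{\mathcal{P}}_L\cap L$ be non-zero with $f^2=0$ and let $b=\mathbb{R}_{>0}f$ be the corresponding rational boundary point. Then there exists $\alpha_0>0$ such that for every $0<\alpha\le\alpha_0$ the closed horoball $\mathrm{HB}=\mathrm{HB}_b(\alpha)$ satisfies: (1) for $v\in\mathcal{V}$, the hyperplane $\pi_L((v)^\perp)$ of $\mathcal{H}_L$ intersects $\mathrm{HB}$ if and only if $\langle v,f\rangle=0$ (i.e. $\pi_L((v)^\perp)$ passes through $b$ at infinity); (2) for every $\mathcal{V}^*$-chamber $D$: if $f$ does not lie in the closure $\overline{D}$ of $D$ in $L\otimes\mathbb{R}$, then $\pi_L(D)\cap\mathrm{HB}=\emptyset$, whereas if $f\in\overline{D}$ then $\pi_L(D)\cap\mathrm{HB}=\rho_b^{-1}(\pi_L(D)\cap\partial\mathrm{HB})$. (V1) There is $c>0$ with $-v^2<c$ for all $v\in\mathcal{V}$. (V2) $\mathcal{V}$ is $G$-invariant. (V3) Every $\mathcal{V}^*$-chamber has a finite defining set. (V4) For every $\mathcal{V}^*$-chamber $D$, every non-zero $x\in\overline{D}$ with $x^2=0$ is a positive real multiple of a vector of $L$.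
   Context: $L$ is an even hyperbolic lattice (free $\mathbb{Z}$-module of rank $n>1$ with non-degenerate even symmetric bilinear form $\langle\ ,\ \rangle$ of signature $(1,n-1)$, extended to $L\otimes\mathbb{R}$); $L^\vee$ its dual lattice; $\mathcal{P}_L$ a connected component of $\{x:x^2>0\}$, $\overline{\mathcal{P}}_L$ its closure; $\mathrm{O}^+(L)$ the isometries preserving $\mathcal{P}_L$. $\mathcal{N}_L=\{v: v^2<0\}$, $(v)^\perp=\{x\in\mathcal{P}_L:\langle x,v\rangle=0\}$, $\Sigma_L(\Delta)=\{x:\langle x,v\rangle\ge0\ \forall v\in\Delta\}$. A $\mathcal{V}^*$-chamber is the closure in $\mathcal{P}_L$ of a connected component of $\mathcal{P}_L\setminus\bigcup_{v\in\mathcal{V}}(v)^\perp$; a defining set of such $D$ is $\Delta\subset\mathcal{N}_L\cap L^\vee$ with $D=\Sigma_L(\Delta)\cap\mathcal{P}_L$. $\mathcal{H}_L=\mathcal{P}_L/\mathbb{R}_{>0}$ is the hyperbolic space with projection $\pi_L:\mathcal{P}_L\to\mathcal{H}_L$. For $\alpha>0$ the closed horoball with base $b$ is $\mathrm{HB}_b(\alpha)=\pi_L(\{x\in\mathcal{P}_L:\langle x,f\rangle^2/x^2\le\alpha\})$, with boundary horosphere $\partial\mathrm{HB}_b(\alpha)=\pi_L(\{x\in\mathcal{P}_L:\langle x,f\rangle^2/x^2=\alpha\})$. The natural projection $\rho_b:\mathrm{HB}_b(\alpha)\to\partial\mathrm{HB}_b(\alpha)$ sends a point $p$ to the unique point of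 $\partial\mathrm{HB}_b(\alpha)$ on the geodesic line of $\mathcal{H}_L$ through $p$ that passes through $b$ at infinity (the image under $\pi_L$ of $\mathcal{P}_L\cap(\mathbb{R}x+\mathbb{R}f)$ for $x$ a representative of $p$). *)

From HB Require Import structures.
From mathcomp Require Import all_boot all_order all_algebra.
From mathcomp Require Import all_classical all_reals all_analysis.
Set Implicit Arguments. Unset Strict Implicit. Unset Printing Implicit Defensive.
Import Order.TTheory GRing.Theory Num.Theory.
Import numFieldTopology.Exports numFieldNormedType.Exports.
Local Open Scope classical_set_scope.
Local Open Scope ring_scope.

(* The lattice L is Z^n (integer row vectors) with Gram matrix Q : 'M[int]_n.
   L (x) R is 'rV[R]_n, with the R-bilinear extension of the form. *)

Definition Qr (R : realType) (n : nat) (Q : 'M[int]_n) : 'M[R]_n :=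
  map_mx (fun z : int => z%:~R) Q.

Definition bil (R : realType) (n : nat) (Q : 'M[int]_n) (x y : 'rV[R]_n) : R :=
  (x *m Qr R Q *m y^T) 0 0.

Definition inL (R : realType) (n : nat) (x : 'rV[R]_n) : Prop :=
  exists z : 'rV[int]_n, x = map_mx (fun k : int => k%:~R) z.

Definition inLdual (R : realType) (n : nat) (Q : 'M[int]_n) (x : 'rV[R]_n) : Prop :=
  forall y, inL y -> exists k : int, bil Q x y = k%:~R.

Definition hyp_signature (R : realType) (n : nat) (Q : 'M[int]_n) : Prop :=
  exists P : 'M[R]_n, P \in unitmx /\
    P *m Qr R Q *m P^T = diag_mx (\row_(i < n) if (i : nat) == 0%N then 1 else -1).

Definition even_hyperbolic_lattice (R : realType) (n : nat) (Q : 'M[int]_n) : Prop :=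
  [/\ (1 < n)%N, Q^T = Q, \det Q != 0,
      (forall z : 'rV[int]_n, (z *m Q *m z^T) 0 0 \in dvdz 2)
    & hyp_signature R Q].

(* The positive cone P_L: the connected component of {x^2 > 0} containing h *)
Definition posCone (R : realType) (n : nat) (Q : 'M[int]_n) (h : 'rV[R]_n) :
  set 'rV[R]_n := [set x | 0 < bil Q x x /\ 0 < bil Q x h].

Definition actR (R : realType) (n : nat) (g : 'M[int]_n) : 'M[R]_n :=
  map_mx (fun z : int => z%:~R) g.

Definition OplusL (R : realType) (n : nat) (Q : 'M[int]_n) (h : 'rV[R]_n)
  (g : 'M[int]_n) : Prop :=
  [/\ g \in unitmx, g *m Q *m g^T = Q &
      forall x, posCone Q h x -> posCone Q h (x *m actR R g)].

Definition finite_index_subgroup (R : realType) (n : nat) (Q : 'M[int]_n)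
  (h : 'rV[R]_n) (G : set 'M[int]_n) : Prop :=
  [/\ G `<=` OplusL Q h, G 1%:M,
      (forall g1 g2, G g1 -> G g2 -> G (g1 *m g2)),
      (forall g, G g -> G (invmx g)) &
      exists s : seq 'M[int]_n, forall g, OplusL Q h g ->
        exists2 a, a \in s & G (invmx a *m g)].

Definition negL (R : realType) (n : nat) (Q : 'M[int]_n) : set 'rV[R]_n :=
  [set v | bil Q v v < 0].

Definition perpP (R : realType) (n : nat) (Q : 'M[int]_n) (h v : 'rV[R]_n) :
  set 'rV[R]_n := [set x | posCone Q h x /\ bil Q x v = 0].

Definition SigmaL (R : realType) (n : nat) (Q : 'M[int]_n) (Delta : set 'rV[R]_n) :
  set 'rV[R]_n := [set x | forall v, Delta v -> 0 <= bil Q x v].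

Definition chamber_open_part (R : realType) (n : nat) (Q : 'M[int]_n)
  (h : 'rV[R]_n) (V : set 'rV[R]_n) : set 'rV[R]_n :=
  posCone Q h `\` \bigcup_(v in V) perpP Q h v.

Definition is_chamber (R : realType) (n : nat) (Q : 'M[int]_n)
  (h : 'rV[R]_n) (V : set 'rV[R]_n) (D : set 'rV[R]_n) : Prop :=
  exists2 x, chamber_open_part Q h V x &
    D = closure (connected_component (chamber_open_part Q h V) x) `&` posCone Q h.

Definition defining_set (R : realType) (n : nat) (Q : 'M[int]_n)
  (h : 'rV[R]_n) (D Delta : set 'rV[R]_n) : Prop :=
  Delta `<=` negL Q `&` inLdual Q /\ D = SigmaL Q Delta `&` posCone Q h.

(* Hyperbolic space H_L = P_L / R_{>0}: a point is an open ray {t x | t > 0}. *)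
Definition ray (R : realType) (n : nat) (x : 'rV[R]_n) : set 'rV[R]_n :=
  [set t *: x | t in [set t : R | 0 < t]].

Definition piL (R : realType) (n : nat) (A : set 'rV[R]_n) : set (set 'rV[R]_n) :=
  (@ray R n) @` A.

Definition horoball (R : realType) (n : nat) (Q : 'M[int]_n) (h f : 'rV[R]_n)
  (alpha : R) : set (set 'rV[R]_n) :=
  piL [set x | posCone Q h x /\ (bil Q x f) ^+ 2 / bil Q x x <= alpha].

Definition horosphere (R : realType) (n : nat) (Q : 'M[int]_n) (h f : 'rV[R]_n)
  (alpha : R) : set (set 'rV[R]_n) :=
  piL [set x | posCone Q h x /\ (bil Q x f) ^+ 2 / bil Q x x = alpha].

(* rho_b(p) = q : q is the point of the horosphere on the geodesic line
   pi_L(P_L cap (R x + R f)) through p = pi_L(x) and b. *)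
Definition rho_rel (R : realType) (n : nat) (Q : 'M[int]_n) (h f : 'rV[R]_n)
  (alpha : R) (p q : set 'rV[R]_n) : Prop :=
  exists2 x, posCone Q h x /\ p = ray x &
    horosphere Q h f alpha q /\
    piL (posCone Q h `&` [set a *: x + c *: f | a in setT & c in setT]) q.

Definition rho_preimage (R : realType) (n : nat) (Q : 'M[int]_n) (h f : 'rV[R]_n)
  (alpha : R) (S : set (set 'rV[R]_n)) : set (set 'rV[R]_n) :=
  [set p | horoball Q h f alpha p /\
           exists2 q, rho_rel Q h f alpha p q & S q].

From HB Require Import structures.
From mathcomp Require Import all_boot all_order all_algebra.
From mathcomp Require Import all_classical all_reals all_analysis.
From mathcomp Require Import ring lra.
Import Order.TTheory GRing.Theory Num.Theory.
Import numFieldTopology.Exports numFieldNormedType.Exports.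
Local Open Scope classical_set_scope.
Local Open Scope ring_scope.
Set Implicit Arguments. Unset Strict Implicit. Unset Printing Implicit Defensive.

(* Take [alpha0 = 1 / (2 c)]; a point [x] of [P_L] whose ray lies in
   [HB_b(alpha)] then satisfies [c <x,f>^2 < x^2].  If such an [x] lies on a wall
   [v^perp] with [v] in [L^vee], then [<v,f>] is an integer and
   [<x,f> v - <v,f> x] is orthogonal to the isotropic [f], hence of square
   [<= 0]; this gives [<v,f>^2 x^2 <= - v^2 <x,f>^2 < x^2], so [<v,f> = 0].
   Translating by multiples of [f] preserves [<x,f>] and changes [x^2] affinely,
   so segments in that region in the direction of [f] cross no wall: a chamber
   meeting the horoball contains the corresponding pieces of the geodesics
   through [b], which gives (2), and [f] is the limit of the points
   [e d + f] of the chamber as [e -> 0+].  The signature enters through a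
   linear form [phi] with [x^2 <= phi x ^2], which fixes the signs of [<x,f>]
   and [<x,h>].  Only (V1) and [V <= L^vee] are needed. *)

Section Bilinear.
Variables (R : realType) (n : nat) (Q : 'M[int]_n).
Implicit Types (x y z : 'rV[R]_n) (a : R).

Lemma bilDl x y z : bil Q (x + y) z = bil Q x z + bil Q y z.
Proof. by rewrite /bil !mulmxDl mxE. Qed.

Lemma bilZl a x z : bil Q (a *: x) z = a * bil Q x z.
Proof. by rewrite /bil -!scalemxAl mxE. Qed.

Lemma bilNl x z : bil Q (- x) z = - bil Q x z.
Proof. by rewrite /bil !mulNmx mxE. Qed.

Lemma bilDr x y z : bil Q z (x + y) = bil Q z x + bil Q z y.
Proof. by rewrite /bil linearD /= mulmxDr mxE. Qed.

Lemma bilZr a x z : bil Q z (a *: x) = a * bil Q z x.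
Proof. by rewrite /bil linearZ /= -scalemxAr mxE. Qed.

Lemma bilNr x z : bil Q z (- x) = - bil Q z x.
Proof. by rewrite /bil linearN /= mulmxN mxE. Qed.

Lemma bil0l z : bil Q 0 z = 0.
Proof. by rewrite /bil !mul0mx mxE. Qed.

Lemma bil_pos_neq0 x : 0 < bil Q x x -> x != 0.
Proof. by apply: contraTneq => ->; rewrite bil0l ltxx. Qed.

Lemma bil_continuousl z : continuous (fun y => bil Q y z).
Proof.
have -> : (fun y => bil Q y z) = (fun y => \sum_j y 0 j * (Qr R Q *m z^T) j 0).
  by apply/funext => y; rewrite /bil -mulmxA mxE.
apply: continuous_big => [|j _ y]; first exact: add_continuous.
by apply: continuousM; [exact: coord_continuous | exact: cst_continuous].
Qed.

Lemma bil_diag_continuous : continuous (fun y => bil Q y y).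
Proof.
have -> : (fun y => bil Q y y) =
    (fun y => \sum_j (\sum_k y 0 k * Qr R Q k j) * y 0 j).
  by apply/funext => y; rewrite /bil mxE; apply: eq_bigr => j _; rewrite !mxE.
apply: continuous_big => [|j _ y]; first exact: add_continuous.
apply: continuousM; last exact: coord_continuous.
apply: continuous_big => [|k _ z]; first exact: add_continuous.
by apply: continuousM; [exact: coord_continuous | exact: cst_continuous].
Qed.

Hypothesis QT : Q^T = Q.

Lemma bil_sym x y : bil Q x y = bil Q y x.
Proof.
have trE (A : 'M[R]_1) : A 0 0 = A^T 0 0 by rewrite mxE.
by rewrite /bil trE !trmx_mul trmxK /Qr map_trmx QT mulmxA.
Qed.

Lemma perp_posCone (h v : 'rV[R]_n) :
  0 < bil Q h h -> bil Q v v < 0 -> exists2 y, posCone Q h y & bil Q y v = 0.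
Proof.
move=> h_pos v_neg; have v_neq0 : bil Q v v != 0 by rewrite lt_eqF.
have hv_ge0 : 0 <= - (bil Q h v ^+ 2 / bil Q v v).
  by rewrite -mulrN mulr_ge0 ?sqr_ge0 // oppr_ge0 invr_le0 ltW.
pose y := h - (bil Q h v / bil Q v v) *: v.
have yy : bil Q y y = bil Q h h - bil Q h v ^+ 2 / bil Q v v.
  by rewrite !(bilDl, bilDr, bilNl, bilNr, bilZl, bilZr) (bil_sym v h); field.
have yh : bil Q y h = bil Q h h - bil Q h v ^+ 2 / bil Q v v.
  by rewrite bilDl bilNl bilZl (bil_sym v h); field.
exists y; first by split; [rewrite yy | rewrite yh]; lra.
by rewrite bilDl bilNl bilZl; field.
Qed.

Variable f : 'rV[R]_n.
Hypothesis f_isotropic : bil Q f f = 0.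

Lemma bil_shift_f y a : bil Q (y + a *: f) f = bil Q y f.
Proof. by rewrite bilDl bilZl f_isotropic mulr0 addr0. Qed.

Lemma bil_shift_diag y a :
  bil Q (y + a *: f) (y + a *: f) = bil Q y y + 2 * a * bil Q y f.
Proof.
by rewrite !(bilDl, bilDr, bilZl, bilZr) f_isotropic (bil_sym f y); ring.
Qed.

End Bilinear.

Lemma quadratic_ge0_discr (R : realFieldType) (A B X : R) :
  (forall t, 0 <= A + 2 * t * X + t ^+ 2 * B) -> 0 <= B -> X ^+ 2 <= A * B.
Proof.
move=> Hq B0; have A0 : 0 <= A by have := Hq 0; rewrite expr0n /=; nra.
have [B_eq0|B_neq0] := eqVneq B 0.
  have [->|X_neq0] := eqVneq X 0; first by rewrite B_eq0 expr0n /= mulr0.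
  have := Hq (- (A + 1) / (2 * X)); rewrite B_eq0 mulr0 addr0.
  have -> : 2 * (- (A + 1) / (2 * X)) * X = - (A + 1) by field.
  lra.
have B_gt0 : 0 < B by rewrite lt_neqAle eq_sym B_neq0.
have := Hq (- X / B).
have -> : A + 2 * (- X / B) * X + (- X / B) ^+ 2 * B = (A * B - X ^+ 2) / B.
  by field.
by rewrite pmulr_lge0 ?invr_gt0 // subr_ge0.
Qed.

(* [x *m p] is the first coordinate of [x] in a basis diagonalising the form
   as [diag(1, -1, ..., -1)]. *)
Definition time_coordinate (R : realType) n (Q : 'M[int]_n) (p : 'cV[R]_n) :=
  (forall x, bil Q x x <= ((x *m p) 0 0) ^+ 2) /\
  (forall x, (x *m p) 0 0 = 0 -> bil Q x x = 0 -> x = 0).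

Lemma time_coordinateN (R : realType) n (Q : 'M[int]_n) (p : 'cV[R]_n) :
  time_coordinate Q p -> time_coordinate Q (- p).
Proof.
move=> [le_sq null0]; split=> x; rewrite mulmxN mxE ?sqrrN //.
by move=> /eqP; rewrite oppr_eq0 => /eqP; exact: null0.
Qed.

Lemma hyp_signature_sqr (R : realType) n (Q : 'M[int]_n) (P : 'M[R]_n)
    (i0 : 'I_n) :
  P \in unitmx ->
  P *m Qr R Q *m P^T = diag_mx (\row_(i < n) if (i : nat) == 0%N then 1 else -1) ->
  (i0 : nat) = 0%N -> forall x : 'rV[R]_n,
  bil Q x x = (x *m invmx P) 0 i0 ^+ 2 - \sum_(j | j != i0) (x *m invmx P) 0 j ^+ 2.
Proof.
move=> P_unit PQ i0_0 x; set u := x *m invmx P.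
have -> : bil Q x x = (u *m diag_mx (\row_(i < n)
    if (i : nat) == 0%N then 1 else -1) *m u^T) 0 0.
  rewrite -PQ /bil /u trmx_mul !mulmxA mulmxKV //.
  by rewrite -(mulmxA _ P^T) -trmx_mul mulVmx // trmx1 mulmx1.
rewrite mxE (bigD1 i0) //= -sumrN; congr (_ + _).
  by rewrite mul_mx_diag !mxE i0_0 mulr1 expr2.
apply: eq_bigr => j j_neq; rewrite mul_mx_diag !mxE.
rewrite ifF ?mulrN1 ?mulNr ?expr2 //; apply/negbTE; apply: contra j_neq => /eqP j0.
by apply/eqP/val_inj; rewrite /= j0 i0_0.
Qed.

Lemma time_coordinate_exists (R : realType) n (Q : 'M[int]_n) (h : 'rV[R]_n) :
  (0 < n)%N -> hyp_signature R Q -> 0 < bil Q h h ->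
  exists2 p, time_coordinate Q p & 0 < (h *m p) 0 0.
Proof.
move=> n_gt0 [P [P_unit PQ]] h_pos; set i0 : 'I_n := Ordinal n_gt0.
have bilE := hyp_signature_sqr P_unit PQ (erefl : (i0 : nat) = 0%N).
pose p := col i0 (invmx P).
have pE x : (x *m p) 0 0 = (x *m invmx P) 0 i0 by rewrite /p colE mulmxA -colE mxE.
have p_time : time_coordinate Q p.
  split=> x; rewrite pE bilE.
    by rewrite lerBlDr lerDl; apply: sumr_ge0 => j _; exact: sqr_ge0.
  move=> xp0; rewrite xp0 expr0n /= sub0r => /eqP; rewrite oppr_eq0.
  rewrite psumr_eq0 => [/allP x_eq0|j _]; last exact: sqr_ge0.
  rewrite -(mulmxKV P_unit x); suff -> : x *m invmx P = 0 by rewrite mul0mx.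
  apply/rowP => j; rewrite [RHS]mxE.
  have [->|j_neq] := eqVneq j i0; first exact: xp0.
  by have := x_eq0 j (mem_index_enum j); rewrite j_neq sqrf_eq0 => /eqP.
have hp_neq0 : (h *m p) 0 0 != 0.
  apply: contraTneq h_pos => hp0; rewrite -leNgt.
  by have := p_time.1 h; rewrite hp0 expr0n.
have [hp_lt0|hp_gt0] := ltrP ((h *m p) 0 0) 0; last first.
  by exists p; rewrite // lt_neqAle eq_sym hp_neq0.
by exists (- p); [exact: time_coordinateN | rewrite mulmxN mxE oppr_gt0].
Qed.

Section TimeOrientation.
Variables (R : realType) (n : nat) (Q : 'M[int]_n) (p : 'cV[R]_n).
Hypotheses (QT : Q^T = Q) (p_time : time_coordinate Q p).
Local Notation phi x := ((x *m p) 0 0).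

Lemma time_sign (a b : 'rV[R]_n) :
  0 < bil Q a a -> 0 <= bil Q b b -> b != 0 -> 0 < bil Q a b * (phi a * phi b).
Proof.
move=> a_pos b_nneg b_neq0; have [le_sq null0] := p_time.
have pb_neq0 : phi b != 0.
  apply: contra_neq b_neq0 => pb0; apply: null0 => //.
  by apply/eqP; rewrite eq_le b_nneg andbT; have := le_sq b; rewrite pb0 expr0n.
(* Cauchy-Schwarz for the positive semidefinite form [phi x ^+ 2 - bil Q x x] *)
have CS : (phi a * phi b - bil Q a b) ^+ 2 <=
    (phi a ^+ 2 - bil Q a a) * (phi b ^+ 2 - bil Q b b).
  apply: quadratic_ge0_discr => [t|]; last by rewrite subr_ge0.
  have := le_sq (a + t *: b); rewrite -subr_ge0 mulmxDl -scalemxAl !mxE.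
  rewrite !(bilDl, bilDr, bilZl, bilZr) (bil_sym QT b a); congr (0 <= _); ring.
have := le_sq a; have := le_sq b; have : 0 < phi b ^+ 2 by rewrite exprn_even_gt0.
nra.
Qed.

Lemma orth_isotropic_le0 (f w : 'rV[R]_n) :
  f != 0 -> bil Q f f = 0 -> bil Q w f = 0 -> bil Q w w <= 0.
Proof.
move=> f_neq0 f_iso wf0; rewrite leNgt; apply/negP => w_pos.
have f_nneg : 0 <= bil Q f f by rewrite f_iso.
by have := time_sign w_pos f_nneg f_neq0; rewrite wf0 mul0r ltxx.
Qed.

Lemma wall_through_isotropic (f v x : 'rV[R]_n) (c : R) :
  f != 0 -> bil Q f f = 0 -> inL f -> inLdual Q v -> - bil Q v v < c ->
  0 < bil Q x x -> bil Q x v = 0 -> c * bil Q x f ^+ 2 < bil Q x x ->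
  bil Q v f = 0.
Proof.
move=> f_neq0 f_iso f_L v_dual v_bound x_pos xv0 x_deep.
have [k vfE] := v_dual f f_L; have [k0|k_neq0] := eqVneq k 0; first by rewrite vfE k0.
have vf_ge1 : 1 <= bil Q v f ^+ 2 by rewrite vfE sqr_intr_ge1 ?intr_int ?intr_eq0.
pose w := bil Q x f *: v - bil Q v f *: x.
have wf0 : bil Q w f = 0 by rewrite bilDl bilNl !bilZl mulrC subrr.
have := orth_isotropic_le0 f_neq0 f_iso wf0.
rewrite !(bilDl, bilDr, bilNl, bilNr, bilZl, bilZr) (bil_sym QT v x) xv0.
have := sqr_ge0 (bil Q x f); nra.
Qed.

Variable h : 'rV[R]_n.
Hypotheses (h_pos : 0 < bil Q h h) (ph_gt0 : 0 < phi h).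

Lemma posCone_phi_gt0 x : posCone Q h x -> 0 < phi x.
Proof.
move=> [x_pos xh_pos].
by have := time_sign x_pos (ltW h_pos) (bil_pos_neq0 h_pos); rewrite pmulr_rgt0 // pmulr_lgt0.
Qed.

Variable f : 'rV[R]_n.
Hypotheses (f_cl : closure (posCone Q h) f) (f_neq0 : f != 0)
  (f_iso : bil Q f f = 0).

Lemma bil_f_h_gt0 : 0 < bil Q f h /\ 0 < phi f.
Proof.
have fh_ge0 : 0 <= bil Q f h.
  have cl : closed [set y | 0 <= bil Q y h].
    apply: (@preimage_closed _ _ (fun y => bil Q y h) [set r | 0 <= r]) => [y _|].
      exact: bil_continuousl.
    exact: closed_ge.
  have sub : posCone Q h `<=` [set y | 0 <= bil Q y h] by move=> y [_ /ltW].
  by have := closureS sub f_cl; rewrite -(closure_id _).1.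
have f_nneg : 0 <= bil Q f f by rewrite f_iso.
have := time_sign h_pos f_nneg f_neq0; rewrite (bil_sym QT h f) => prod_gt0.
have fh_gt0 : 0 < bil Q f h.
  by rewrite lt_neqAle fh_ge0 andbT; apply: contraTneq prod_gt0 => <-; rewrite mul0r ltxx.
by move: prod_gt0; rewrite !pmulr_rgt0.
Qed.

Lemma posCone_bil_f_gt0 x : posCone Q h x -> 0 < bil Q x f.
Proof.
move=> x_cone; have f_nneg : 0 <= bil Q f f by rewrite f_iso.
have := time_sign (proj1 x_cone) f_nneg f_neq0.
by rewrite pmulr_lgt0 // mulr_gt0 // ?(posCone_phi_gt0 x_cone) ?(proj2 bil_f_h_gt0).
Qed.

Lemma posCone_of_bil_f_gt0 x : 0 < bil Q x x -> 0 < bil Q x f -> posCone Q h x.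
Proof.
move=> x_pos xf_pos; split=> //; have f_nneg : 0 <= bil Q f f by rewrite f_iso.
have := time_sign x_pos f_nneg f_neq0; rewrite pmulr_rgt0 // pmulr_lgt0 //; last first.
  exact: (proj2 bil_f_h_gt0).
move=> px_gt0; have := time_sign x_pos (ltW h_pos) (bil_pos_neq0 h_pos).
by rewrite pmulr_lgt0 // mulr_gt0.
Qed.
End TimeOrientation.

Lemma connected_component_segment (R : realType) (V : normedModType R)
    (O : set V) (x0 y e : V) :
  connected_component O x0 y -> (forall t : R, 0 <= t <= 1 -> O (y + t *: e)) ->
  connected_component O x0 (y + e).
Proof.
move=> Cy seg_in; pose g t := y + t *: e.
have g_cont : continuous g.
  move=> t; apply: (cvg_comp2 (cvg_cst _) _ (add_continuous (_, _))).
  exact: scalel_continuous.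
have seg_conn : connected (g @` `[0, 1]%classic).
  apply: connected_continuous_connected; last exact: continuous_subspaceT.
  by apply/connected_intervalP; exact: interval_is_interval.
have seg_sub : g @` `[0, 1]%classic `<=` O.
  by move=> z [t /= t01 <-]; apply: seg_in; rewrite in_itv /= in t01.
have seg_y : (g @` `[0, 1]%classic) y.
  by exists 0; [rewrite /= in_itv /= lexx ler01 | rewrite /g scale0r addr0].
rewrite (same_connected_component Cy).
apply: (connected_component_max seg_y seg_sub seg_conn).
by exists 1; [rewrite /= in_itv /= lexx ler01 | rewrite /g scale1r].
Qed.

Lemma continuous_near_gt0 (T : topologicalType) (R : realType) (g : T -> R) (d : T) :
  0 < g d -> {for d, continuous g} -> \forall y \near d, 0 < g y.
Proof. by move=> gd_gt0 g_cont; exact: cvgr_gt g_cont _ gd_gt0. Qed.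

Lemma closure_map_near (T U : topologicalType) (A W : set T) (B : set U)
    (g : T -> U) (d : T) :
  closure A d -> nbhs d W -> {for d, continuous g} ->
  (forall y, A y -> W y -> B (g y)) -> closure B (g d).
Proof.
move=> Ad Wd g_cont AWB N N_gd.
have [y [Ay [Wy Ny]]] := Ad _ (filterI Wd (g_cont _ N_gd)).
by exists (g y); split => //; exact: AWB.
Qed.

Section ChamberCone.
Variables (R : realType) (n : nat) (Q : 'M[int]_n) (h : 'rV[R]_n).
Variable V : set 'rV[R]_n.
Local Notation O := (chamber_open_part Q h V).
Implicit Types (x y d : 'rV[R]_n) (t : R).

Lemma posConeZ t x : 0 < t -> posCone Q h x -> posCone Q h (t *: x).
Proof.
move=> t_gt0 [x_pos xh_pos]; split; rewrite !(bilZl, bilZr); last exact: mulr_gt0.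
by rewrite mulrA !mulr_gt0.
Qed.

Lemma chamber_open_partZ t y : 0 < t -> O y -> O (t *: y).
Proof.
move=> t_gt0 [y_cone y_off]; split; first exact: posConeZ.
move=> [v Vv [_ tyv0]]; apply: y_off; exists v => //; split => //.
by move: tyv0; rewrite bilZl => /eqP; rewrite mulf_eq0 gt_eqF //= => /eqP.
Qed.

Lemma connected_componentZ (x0 : 'rV[R]_n) t y :
  0 < t -> connected_component O x0 y -> connected_component O x0 (t *: y).
Proof.
move=> t_gt0 Cy; have -> : t *: y = y + (t - 1) *: y.
  by rewrite scalerBl scale1r addrC subrK.
apply: connected_component_segment => // s /andP[s_ge0 s_le1].
have -> : y + s *: ((t - 1) *: y) = ((1 - s) + s * t) *: y.
  by rewrite scalerA -[X in X + _]scale1r -scalerDl; congr (_ *: _); ring.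
by apply: chamber_open_partZ; [nra | exact: connected_component_sub Cy].
Qed.

Lemma closure_connected_componentZ (x0 : 'rV[R]_n) t d : 0 < t ->
  closure (connected_component O x0) d -> closure (connected_component O x0) (t *: d).
Proof.
move=> t_gt0 Cd.
apply: (closure_map_near (W := setT) (g := fun y => t *: y) Cd filterT).
  exact: scaler_continuous.
by move=> y Cy _; exact: connected_componentZ.
Qed.

End ChamberCone.

Lemma ray_self (R : realType) n (x : 'rV[R]_n) : ray x x.
Proof. by exists 1; [rewrite /= ltr01 | rewrite scale1r]. Qed.

Lemma ray_eq_scale (R : realType) n (x y : 'rV[R]_n) :
  ray x = ray y -> exists2 t : R, 0 < t & y = t *: x.
Proof. by move=> xy; have := ray_self y; rewrite -xy => -[t /= t_gt0 <-]; exists t. Qed.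

Lemma rayZ (R : realType) n (x : 'rV[R]_n) (t : R) : 0 < t -> ray (t *: x) = ray x.
Proof.
move=> t_gt0; apply/seteqP; split => y [s /= s_gt0 <-].
  by exists (s * t); [rewrite /= mulr_gt0 | rewrite scalerA].
exists (s / t); first by rewrite /= divr_gt0.
by rewrite scalerA divfK // gt_eqF.
Qed.

Definition horo_ratio (R : realType) n (Q : 'M[int]_n) (f x : 'rV[R]_n) : R :=
  bil Q x f ^+ 2 / bil Q x x.

Section HoroRatio.
Variables (R : realType) (n : nat) (Q : 'M[int]_n) (h f : 'rV[R]_n) (alpha : R).
Implicit Types (x y : 'rV[R]_n) (t : R).

Lemma horo_ratioZ t x : t != 0 -> horo_ratio Q f (t *: x) = horo_ratio Q f x.
Proof.
move=> t_neq0; rewrite /horo_ratio !(bilZl, bilZr).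
have [->|x_neq0] := eqVneq (bil Q x x) 0; first by rewrite !mulr0 invr0 !mulr0.
by field; rewrite t_neq0 x_neq0.
Qed.

Lemma horo_ratio_ray x y : ray x = ray y -> horo_ratio Q f y = horo_ratio Q f x.
Proof. by move=> /ray_eq_scale [t t_gt0 ->]; rewrite horo_ratioZ // gt_eqF. Qed.

Lemma horoball_ray x : horoball Q h f alpha (ray x) -> horo_ratio Q f x <= alpha.
Proof. by move=> [y [_ y_ratio] /horo_ratio_ray ->]. Qed.

Lemma horosphere_ray x : horosphere Q h f alpha (ray x) -> horo_ratio Q f x = alpha.
Proof. by move=> [y [_ y_ratio] /horo_ratio_ray ->]. Qed.

End HoroRatio.

Section Horoball.
Variables (R : realType) (n : nat) (Q : 'M[int]_n) (p : 'cV[R]_n).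
Variables (h f : 'rV[R]_n) (V : set 'rV[R]_n) (c : R).
Hypotheses (QT : Q^T = Q) (p_time : time_coordinate Q p).
Hypotheses (h_pos : 0 < bil Q h h) (ph_gt0 : 0 < (h *m p) 0 0).
Hypotheses (f_cl : closure (posCone Q h) f) (f_neq0 : f != 0)
  (f_iso : bil Q f f = 0) (f_L : inL f).
Hypotheses (V_sub : V `<=` negL Q `&` inLdual Q) (c_gt0 : 0 < c)
  (V_bound : forall v, V v -> - bil Q v v < c).
Local Notation O := (chamber_open_part Q h V).
Local Notation ratio := (horo_ratio Q f).
Local Notation chamber x0 := (closure (connected_component O x0) `&` posCone Q h).
Implicit Types (x y d : 'rV[R]_n) (s t : R).

(* The region, containing small horoballs at [b], where every wall of [V]
   that is met passes through [b]. *)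
Let deep x := posCone Q h x /\ c * bil Q x f ^+ 2 < bil Q x x.

Let fh_gt0 := (bil_f_h_gt0 QT p_time h_pos ph_gt0 f_cl f_neq0 f_iso).1.
Let posCone_f_gt0 := posCone_bil_f_gt0 QT p_time h_pos ph_gt0 f_cl f_neq0 f_iso.
Let posCone_of_f_gt0 := posCone_of_bil_f_gt0 QT p_time h_pos ph_gt0 f_cl f_neq0 f_iso.

Lemma posCone_shift y s : posCone Q h y -> 0 <= s -> posCone Q h (y + s *: f).
Proof.
move=> y_cone s_ge0; have yf_gt0 := posCone_f_gt0 y_cone; have fh := fh_gt0.
have [y_pos yh_pos] := y_cone.
split; first by rewrite bil_shift_diag //; nra.
by rewrite bilDl bilZl; nra.
Qed.

Lemma deep_segment y s t : deep y -> deep (y + s *: f) -> 0 <= t <= 1 ->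
  deep (y + (t * s) *: f).
Proof.
move=> [[y_pos yh_pos] y_deep] [[z_pos zh_pos] z_deep] /andP[t_ge0 t_le1].
move: z_pos zh_pos z_deep; rewrite /deep /posCone /=.
rewrite !bil_shift_diag // !bil_shift_f // !bilDl !bilZl -!mulrA.
set w := s * bil Q y f; set u := s * bil Q f h.
move=> z_pos zh_pos z_deep.
have conv a b : 0 < a -> 0 < b -> 0 < (1 - t) * a + t * b by move=> *; nra.
rewrite -subr_gt0 in y_deep; rewrite -subr_gt0 in z_deep.
have := conv _ _ y_pos z_pos; have := conv _ _ yh_pos zh_pos.
have := conv _ _ y_deep z_deep; move=> *; split; first split; lra.
Qed.

Lemma chamber_open_part_shift y s : O y -> deep (y + s *: f) -> O (y + s *: f).
Proof.
move=> [y_cone y_off] [z_cone z_deep]; split => // -[v Vv [_ zv0]].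
have [_ v_dual] := V_sub Vv.
have vf0 : bil Q v f = 0.
  exact: (wall_through_isotropic QT p_time f_neq0 f_iso f_L v_dual (V_bound Vv)
    (proj1 z_cone) zv0 z_deep).
apply: y_off; exists v => //; split => //.
by move: zv0; rewrite bilDl bilZl (bil_sym QT f v) vf0 mulr0 addr0.
Qed.

Lemma connected_component_shift (x0 : 'rV[R]_n) y s :
  connected_component O x0 y -> deep y -> deep (y + s *: f) ->
  connected_component O x0 (y + s *: f).
Proof.
move=> Cy y_deep z_deep; apply: connected_component_segment => // t t01.
rewrite scalerA; apply: chamber_open_part_shift; last exact: deep_segment.
exact: connected_component_sub Cy.
Qed.

Lemma deep_near d : deep d -> \forall y \near d, deep y.
Proof.
move=> [[d_pos dh_pos] d_deep]; rewrite -subr_gt0 in d_deep.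
have near_yy : \forall y \near d, 0 < bil Q y y.
  apply: (@continuous_near_gt0 _ _ (fun y => bil Q y y) d d_pos).
  exact: bil_diag_continuous.
have near_yh : \forall y \near d, 0 < bil Q y h.
  apply: (@continuous_near_gt0 _ _ (fun y => bil Q y h) d dh_pos).
  exact: bil_continuousl.
have near_deep : \forall y \near d, 0 < bil Q y y - c * bil Q y f ^+ 2.
  apply: (@continuous_near_gt0 _ _ (fun y => bil Q y y - c * bil Q y f ^+ 2) d d_deep).
  apply: continuousB; first exact: bil_diag_continuous.
  apply: continuousM; first exact: cst_continuous.
  by apply: (continuousM (s := fun y => bil Q y f) (t := fun y => bil Q y f));
    exact: bil_continuousl.
apply: filterS (filterI near_yy (filterI near_yh near_deep)).
by move=> y [y_pos [yh_pos y_deep]]; rewrite /deep -subr_gt0.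
Qed.

Lemma closure_connected_component_shift (x0 : 'rV[R]_n) d s :
  closure (connected_component O x0) d -> deep d -> deep (d + s *: f) ->
  closure (connected_component O x0) (d + s *: f).
Proof.
move=> Cd d_deep z_deep.
have shift_cont : continuous (fun y => y + s *: f).
  by move=> y; exact: (cvg_comp2 cvg_id (cvg_cst _) (add_continuous (_, _))).
have W_near : \forall y \near d, deep y /\ deep (y + s *: f).
  near=> y; split; near: y; first exact: deep_near.
  by apply: (shift_cont d); exact: deep_near.
apply: (closure_map_near Cd W_near (shift_cont d)) => y Cy [y_deep yz_deep].
exact: connected_component_shift.
Unshelve. all: by end_near.
Qed.

Variable alpha : R.
Hypotheses (alpha_gt0 : 0 < alpha) (alpha_le : alpha <= (2 * c)^-1).

Lemma deep_of_ratio x : posCone Q h x -> ratio x <= alpha -> deep x.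
Proof.
move=> x_cone; have [x_pos _] := x_cone.
rewrite /horo_ratio ler_pdivrMr // => x_ratio; split=> //.
have two_c_gt0 : 0 < 2 * c by rewrite mulr_gt0.
have := ler_wpM2l (ltW two_c_gt0) alpha_le; rewrite mulfV ?gt_eqF // => ca_le.
have := ler_wpM2l (ltW c_gt0) x_ratio; have := ler_wpM2r (ltW x_pos) ca_le.
nra.
Qed.

Lemma horosphere_shift y : posCone Q h y ->
  exists s, posCone Q h (y + s *: f) /\ ratio (y + s *: f) = alpha.
Proof.
move=> y_cone; have yf_gt0 := posCone_f_gt0 y_cone.
exists ((bil Q y f ^+ 2 / alpha - bil Q y y) / (2 * bil Q y f)).
set z := y + _ *: f.
have zz : bil Q z z = bil Q y f ^+ 2 / alpha by rewrite bil_shift_diag //; field; rewrite !gt_eqF.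
have zf : bil Q z f = bil Q y f by rewrite bil_shift_f.
have z_pos : 0 < bil Q z z by rewrite zz divr_gt0 // exprn_even_gt0 //= gt_eqF.
split; first by apply: posCone_of_f_gt0; rewrite // zf.
by rewrite /horo_ratio zz zf invf_div mulrC divfK // gt_eqF // exprn_even_gt0 //= gt_eqF.
Qed.

Lemma wall_meets_horoball v : V v ->
  piL (perpP Q h v) `&` horoball Q h f alpha !=set0 <-> bil Q v f = 0.
Proof.
move=> Vv; have [v_neg v_dual] := V_sub Vv; split.
  move=> [_ [[x [x_cone xv0] <-] /horoball_ray x_ratio]].
  have [_ x_deep] := deep_of_ratio x_cone x_ratio.
  exact: (wall_through_isotropic QT p_time f_neq0 f_iso f_L v_dual (V_bound Vv)
    (proj1 x_cone) xv0 x_deep).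
move=> vf0; have [y y_cone yv0] := perp_posCone QT h_pos v_neg.
have [s [z_cone z_ratio]] := horosphere_shift y_cone.
have zv0 : bil Q (y + s *: f) v = 0.
  by rewrite bilDl bilZl (bil_sym QT f v) vf0 yv0 mulr0 addr0.
exists (ray (y + s *: f)); split; first by exists (y + s *: f).
by exists (y + s *: f) => //; split; rewrite // -/(ratio _) z_ratio.
Qed.

Lemma chamber_meets_horoball (x0 d : 'rV[R]_n) :
  closure (connected_component O x0) d -> posCone Q h d -> ratio d <= alpha ->
  closure (chamber x0) f.
Proof.
move=> d_cl d_cone d_ratio.
have in_D e : 0 < e -> chamber x0 (e *: d + f).
  move=> e_gt0; rewrite -[f in e *: d + f]scale1r; have ed_cone := posConeZ e_gt0 d_cone.
  have ed_deep : deep (e *: d).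
    by apply: deep_of_ratio; rewrite // horo_ratioZ ?gt_eqF.
  have edf_cone := posCone_shift ed_cone ler01.
  split=> //; apply: closure_connected_component_shift => //.
    exact: closure_connected_componentZ.
  split=> //; rewrite bil_shift_diag // bil_shift_f //.
  by have := posCone_f_gt0 ed_cone; have := ed_deep.2; lra.
have cvg_f : (fun e => e *: d + f) @ 0^'+ --> f.
  have cvg0 : (fun e : R => e *: d + f) @ 0 --> 0 *: d + f.
    by apply: cvgD; [exact: scalel_continuous | exact: cvg_cst].
  by rewrite scale0r add0r in cvg0; exact: cvg_at_right_filter.
apply: (closed_cvg _ (@closed_closure _ (chamber x0)) _ _ cvg_f).
near=> e; apply: subset_closure; apply: in_D; near: e; exact: nbhs_right_gt.
Unshelve. all: by end_near.
Qed.

Lemma chamber_horoball_sub_rho_preimage (x0 : 'rV[R]_n) :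
  piL (chamber x0) `&` horoball Q h f alpha `<=`
  rho_preimage Q h f alpha (piL (chamber x0) `&` horosphere Q h f alpha).
Proof.
move=> _ [[d [d_cl d_cone] <-] d_horo].
have d_deep := deep_of_ratio d_cone (horoball_ray d_horo).
have [s [z_cone z_ratio]] := horosphere_shift d_cone.
have z_deep : deep (d + s *: f) by apply: deep_of_ratio; rewrite // z_ratio.
have z_cl := closure_connected_component_shift d_cl d_deep z_deep.
have z_sphere : horosphere Q h f alpha (ray (d + s *: f)) by exists (d + s *: f).
split=> //; exists (ray (d + s *: f)); last by split=> //; exists (d + s *: f).
exists d => //; split=> //; exists (d + s *: f) => //; split=> //.
by exists 1 => //; exists s => //; rewrite scale1r.
Qed.

Lemma rho_preimage_sub_chamber_horoball (x0 : 'rV[R]_n) :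
  rho_preimage Q h f alpha (piL (chamber x0) `&` horosphere Q h f alpha) `<=`
  piL (chamber x0) `&` horoball Q h f alpha.
Proof.
move=> pt [pt_horo [q [x [x_cone ptE] [_ [z [z_cone [a _ [b _ zE]]] zq]]]]].
move=> [[d [d_cl d_cone] dq] q_sphere]; rewrite ptE in pt_horo *.
have [l l_gt0 dE] := ray_eq_scale (etrans zq (esym dq)).
have a_gt0 : 0 < a.
  have := posCone_f_gt0 z_cone; rewrite -zE bil_shift_f // bilZl.
  by rewrite pmulr_lgt0 // posCone_f_gt0.
have xE : d + (- (l * b)) *: f = (l * a) *: x.
  by rewrite dE -zE scalerDr !scalerA scaleNr addrK.
have la_gt0 : 0 < l * a by rewrite mulr_gt0.
have x'_deep : deep (d + (- (l * b)) *: f).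
  rewrite xE; apply: deep_of_ratio; first exact: posConeZ.
  by rewrite horo_ratioZ ?gt_eqF //; exact: horoball_ray pt_horo.
have d_deep : deep d.
  by rewrite -dq in q_sphere; apply: deep_of_ratio; rewrite // (horosphere_ray q_sphere).
have := closure_connected_component_shift d_cl d_deep x'_deep; rewrite xE => x'_cl.
split=> //; exists ((l * a) *: x); last exact: rayZ.
by split=> //; exact: posConeZ.
Qed.

Lemma chamber_horoball D : is_chamber Q h V D ->
  (~ closure D f -> piL D `&` horoball Q h f alpha = set0) /\
  (closure D f -> piL D `&` horoball Q h f alpha =
     rho_preimage Q h f alpha (piL D `&` horosphere Q h f alpha)).
Proof.
move=> [x0 _ ->]; split=> [f_notin|_]; apply/seteqP; split=> //.
- move=> _ [[d [d_cl d_cone] <-] /horoball_ray d_ratio].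
  exact: f_notin (chamber_meets_horoball d_cl d_cone d_ratio).
- exact: chamber_horoball_sub_rho_preimage.
- exact: rho_preimage_sub_chamber_horoball.
Qed.

End Horoball.

Unset Implicit Arguments.

Theorem corollary3p12 (R : realType) (n : nat) (Q : 'M[int]_n)
  (h : 'rV[R]_n) (G : set 'M[int]_n) (V : set 'rV[R]_n) (f : 'rV[R]_n) :
  even_hyperbolic_lattice R Q ->
  0 < bil Q h h ->
  finite_index_subgroup Q h G ->
  V `<=` negL Q `&` inLdual Q ->
  (* (V1) *)
  (exists2 c : R, 0 < c & forall v, V v -> - bil Q v v < c) ->
  (* (V2) *)
  (forall g, G g -> forall v, V (v *m actR R g) <-> V v) ->
  (* (V3) *)
  (forall D, is_chamber Q h V D ->
     exists s : seq 'rV[R]_n, defining_set Q h D [set v | v \in s]) ->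
  (* (V4) *)
  (forall D, is_chamber Q h V D -> forall x, closure D x -> x != 0 ->
     bil Q x x = 0 -> exists2 t : R, 0 < t & exists2 y, inL y & x = t *: y) ->
  closure (posCone Q h) f -> inL f -> f != 0 -> bil Q f f = 0 ->
  exists2 alpha0 : R, 0 < alpha0 & forall alpha : R, 0 < alpha -> alpha <= alpha0 ->
    (forall v, V v ->
       (piL (perpP Q h v) `&` horoball Q h f alpha !=set0 <-> bil Q v f = 0)) /\
    (forall D, is_chamber Q h V D ->
       (~ closure D f -> piL D `&` horoball Q h f alpha = set0) /\
       (closure D f -> piL D `&` horoball Q h f alpha =
          rho_preimage Q h f alpha (piL D `&` horosphere Q h f alpha))).
Proof.
move=> [n_gt1 QT _ _ sig] h_pos _ V_sub [c c_gt0 V_bound] _ _ _ f_cl f_L f_neq0 f_iso.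
have [p p_time ph_gt0] := time_coordinate_exists (ltnW n_gt1) sig h_pos.
exists (2 * c)^-1 => [|alpha alpha_gt0 alpha_le]; first by rewrite invr_gt0 mulr_gt0.
split=> [v | D].
- exact: (wall_meets_horoball QT p_time h_pos ph_gt0 f_cl f_neq0 f_iso f_L V_sub
    c_gt0 V_bound alpha_gt0 alpha_le).
- exact: (chamber_horoball QT p_time h_pos ph_gt0 f_cl f_neq0 f_iso f_L V_sub
    c_gt0 V_bound alpha_gt0 alpha_le).
Qed.
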